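(* Let $S$ be a semilattice. Then the normal dual $N^*\mathbb{L}(S)$ of $\mathbb{L}(S)$ is isomorphic to the normal category $\mathbb{R}(S)$, and the normal dual $N^*\mathbb{R}(S)$ of $\mathbb{R}(S)$ is isomorphic to the normal category $\mathbb{L}(S)$.
   Context: A semilattice is a commutative semigroup in which every element is idempotent. The category $\mathbb{L}(S)$ has objects $Se$, $e\in S$, morphisms $\rho(e,u,f)\colon Se\to Sf$, $x\mapsto xu$, $u\in eSf$, composed left to right; $\mathbb{R}(S)$ has objects $eS$, morphisms $\lambda(e,u,f)\colon eS\to fS$, $x\mapsto ux$, $u\in fSe$, with $\lambda(e,u,f)\lambda(f,v,h)=\lambda(e,vu,h)$. In either category, a normal cone with apex $c$ is a family $\gamma(a)\colon a\to c$ with (inclusion $a\to b$)$\gamma(b)=\gamma(a)$ whenever $a\subseteq b$ and some $\gamma(a)$ an isomorphism; the epimorphic component of $\rho(e,u,f)$ (resp. $\lambda(e,u,f)$) is $\rho(e,u,g)$ with $Sg=Su$ (resp. $\lambda(e,u,g)$ with $gS=uS$); the cones form a semigroup $T\mathbb{L}(S)$ (resp. $T\mathbb{R}(S)$) under $(\gamma\cdot\delta)(a)=\gamma(a)\,\delta(c_\gamma)^\circ$. For a cone $\gamma$ with apex $c$ and epimorphism $h\colon c\to c'$, $\gamma\ast h$ is $a\mapsto\gamma(a)h$. The normal dual $N^*\mathcal{C}$ of $\mathcal{C}\in\{\mathbb{L}(S),\mathbb{R}(S)\}$ is the category whose objects are the functors $H(\gamma;-)\colon\mathcal{C}\to\mathbf{Set}$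 for cones $\gamma$, with $H(\gamma;d)=\{\gamma\ast f^\circ : f\colon c_\gamma\to d\}$, $H(\gamma;g)\colon\gamma\ast f^\circ\mapsto\gamma\ast(fg)^\circ$, and whose morphisms are natural transformations; isomorphism is as normal categories. *)

From Stdlib Require Import Setoid.

(* Categories with inclusions (data of a normal category needed for    *)
(* the notion of isomorphism of normal categories). Composition is     *)
(* written left to right: comp f g = "f then g".                       *)
Record catI := CatI {
  Ob : Type;
  Hom : Ob -> Ob -> Type;
  idm : forall a, Hom a a;
  comp : forall a b c, Hom a b -> Hom b c -> Hom a c;
  sub : Ob -> Ob -> Prop;
  incl : forall a b, sub a b -> Hom a b
}.

(* plus the epimorphic component f° : a -> im f of a morphism f *)
Record catIE := CatIE {
  base :> catI;
  im : forall a b, Hom base a b -> Ob base;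
  epi : forall a b (f : Hom base a b), Hom base a (im a b f)
}.

Definition bij {A B : Type} (F : A -> B) : Prop :=
  (forall x y, F x = F y -> x = y) /\ (forall y, exists x, F x = y).

(* Isomorphism of normal categories: an inclusion-preserving functor which is
   bijective on objects and on every hom-set (hence an isomorphism of
   categories), reflecting inclusions, so that its inverse is also
   inclusion-preserving. *)
Definition iso_ncat (C D : catI) : Prop :=
  exists (F : Ob C -> Ob D) (FH : forall a b, Hom C a b -> Hom D (F a) (F b)),
    (forall a, FH a a (idm C a) = idm D (F a)) /\
    (forall a b c (f : Hom C a b) (g : Hom C b c),
        FH a c (comp C a b c f g) = comp D (F a) (F b) (F c) (FH a b f) (FH b c g)) /\
    bij F /\
    (forall a b, bij (FH a b)) /\
    (forall a b, sub C a b <-> sub D (F a) (F b)) /\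
    (forall a b (h : sub C a b) (h' : sub D (F a) (F b)),
        FH a b (incl C a b h) = incl D (F a) (F b) h').

Definition family (C : catI) : Type := {c : Ob C & forall a, Hom C a c}.

Definition is_iso (C : catI) a b (f : Hom C a b) : Prop :=
  exists g : Hom C b a, comp C a b a f g = idm C a /\ comp C b a b g f = idm C b.

Definition normal_cone (C : catI) (g : family C) : Prop :=
  (forall a b (h : sub C a b),
      comp C a b (projT1 g) (incl C a b h) (projT2 g b) = projT2 g a) /\
  exists a, is_iso C a (projT1 g) (projT2 g a).

Definition star (C : catI) (g : family C) (c' : Ob C) (h : Hom C (projT1 g) c')
  : family C := existT _ c' (fun a => comp C a (projT1 g) c' (projT2 g a) h).

Definition Hset (C : catIE) (g : family C) (d : Ob C) : family C -> Prop :=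
  fun x => exists f : Hom C (projT1 g) d, x = star C g _ (epi C _ _ f).

(* graph of H(gamma; k) : gamma * f° |-> gamma * (f k)° *)
Definition Hrel (C : catIE) (g : family C) (d d' : Ob C) (k : Hom C d d')
  : family C -> family C -> Prop :=
  fun x y => exists f : Hom C (projT1 g) d,
    x = star C g _ (epi C _ _ f) /\
    y = star C g _ (epi C _ _ (comp C _ _ _ f k)).

(* a Set-valued functor on C, given by its object map and (the graph of)
   its morphism map *)
Definition functorData (C : catI) : Type :=
  ((forall d : Ob C, family C -> Prop) *
   (forall d d' : Ob C, Hom C d d' -> family C -> family C -> Prop))%type.

Definition NOb (C : catIE) : Type :=
  {X : functorData C | exists g, normal_cone C g /\ X = (Hset C g, Hrel C g)}.

Definition FO {C : catIE} (X : NOb C) := fst (proj1_sig X).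
Definition FM {C : catIE} (X : NOb C) := snd (proj1_sig X).

Definition NHom (C : catIE) (X Y : NOb C) : Type :=
  {eta : forall d, {x | FO X d x} -> {y | FO Y d y} |
    forall d d' (k : Hom C d d') (x : {x | FO X d x}) (y : {y | FO X d' y}),
      FM X d d' k (proj1_sig x) (proj1_sig y) ->
      FM Y d d' k (proj1_sig (eta d x)) (proj1_sig (eta d' y))}.

Definition Nid (C : catIE) (X : NOb C) : NHom C X X.
Proof. exists (fun d x => x). intros d d' k x y H; exact H. Defined.

Definition Ncomp (C : catIE) (X Y Z : NOb C) (e1 : NHom C X Y) (e2 : NHom C Y Z)
  : NHom C X Z.
Proof.
  exists (fun d x => proj1_sig e2 d (proj1_sig e1 d x)).
  intros d d' k x y H. apply (proj2_sig e2). apply (proj2_sig e1). exact H.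
Defined.

Definition Nsub (C : catIE) (X Y : NOb C) : Prop :=
  (forall d x, FO X d x -> FO Y d x) /\
  (forall d d' k x y, FM X d d' k x y -> FM Y d d' k x y).

Definition Nincl (C : catIE) (X Y : NOb C) (h : Nsub C X Y) : NHom C X Y.
Proof.
  exists (fun d x => exist _ (proj1_sig x) (proj1 h d _ (proj2_sig x))).
  intros d d' k x y H. simpl. exact (proj2 h _ _ _ _ _ H).
Defined.

Definition NDual (C : catIE) : catI :=
  CatI (NOb C) (NHom C) (Nid C) (Ncomp C) (Nsub C) (Nincl C).

Record semilattice := Semilattice {
  car : Type;
  smul : car -> car -> car;
  smulA : forall x y z, smul x (smul y z) = smul (smul x y) z;
  smulC : forall x y, smul x y = smul y x;
  smulI : forall x, smul x x = x
}.

Definition sand (S : semilattice) (e f : car S) (u : car S) : Prop :=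
  exists s, u = smul S (smul S e s) f.

Lemma sand_char (S : semilattice) e f u :
  sand S e f u -> smul S e u = u /\ smul S u f = u.
Proof.
  intros [s ->]. split.
  - rewrite !smulA, smulI. reflexivity.
  - rewrite <- smulA, smulI. reflexivity.
Qed.

Lemma sand_intro (S : semilattice) e f u :
  smul S e u = u -> smul S u f = u -> sand S e f u.
Proof. intros H1 H2. exists u. rewrite H1, H2. reflexivity. Qed.

Lemma sand_mul (S : semilattice) e f g u v :
  sand S e f u -> sand S f g v -> sand S e g (smul S u v).
Proof.
  intros Hu Hv. destruct (sand_char S _ _ _ Hu) as [Hu1 _].
  destruct (sand_char S _ _ _ Hv) as [_ Hv2].
  apply sand_intro.
  - rewrite smulA, Hu1. reflexivity.
  - rewrite <- smulA, Hv2. reflexivity.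
Qed.

Lemma sand_id (S : semilattice) e : sand S e e e.
Proof. apply sand_intro; apply smulI. Qed.

Lemma sand_epi (S : semilattice) e f u : sand S e f u -> sand S e u u.
Proof.
  intros Hu. destruct (sand_char S _ _ _ Hu) as [H1 _].
  apply sand_intro; [exact H1 | apply smulI].
Qed.

Lemma sand_epiR (S : semilattice) e f u : sand S f e u -> sand S u e u.
Proof.
  intros Hu. destruct (sand_char S _ _ _ Hu) as [_ H2].
  apply sand_intro; [apply smulI | exact H2].
Qed.

Definition Lsub (S : semilattice) (e f : car S) : Prop :=
  forall x, (exists s, x = smul S s e) -> exists s, x = smul S s f.
Definition Rsub (S : semilattice) (e f : car S) : Prop :=
  forall x, (exists s, x = smul S e s) -> exists s, x = smul S f s.

Lemma Lsub_sand (S : semilattice) e f : Lsub S e f -> sand S e f e.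
Proof.
  intros H. destruct (H e (ex_intro _ e (eq_sym (smulI S e)))) as [s Hs].
  apply sand_intro; [apply smulI |].
  rewrite Hs at 1. rewrite <- smulA, smulI. symmetry; exact Hs.
Qed.

Lemma Rsub_sand (S : semilattice) e f : Rsub S e f -> sand S f e e.
Proof.
  intros H. destruct (H e (ex_intro _ e (eq_sym (smulI S e)))) as [s Hs].
  apply sand_intro; [| apply smulI].
  rewrite Hs at 1. rewrite smulA, smulI. symmetry; exact Hs.
Qed.

(* L(S): object Se is represented by e; rho(e,u,f) by u \in eSf *)
Definition Lmor (S : semilattice) (e f : car S) : Type := {u | sand S e f u}.

Definition LS (S : semilattice) : catIE :=
  CatIE
    (CatI (car S) (Lmor S)
       (fun e => exist _ e (sand_id S e))
       (fun e f g (u : Lmor S e f) (v : Lmor S f g) =>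
          exist _ (smul S (proj1_sig u) (proj1_sig v))
            (sand_mul S _ _ _ _ _ (proj2_sig u) (proj2_sig v)))
       (Lsub S)
       (fun e f h => exist _ e (Lsub_sand S e f h)))
    (fun e f (u : Lmor S e f) => proj1_sig u)   (* Sg = Su : g = u *)
    (fun e f (u : Lmor S e f) =>
       exist _ (proj1_sig u) (sand_epi S _ _ _ (proj2_sig u))).

(* R(S): object eS is represented by e; lambda(e,u,f) by u \in fSe;
   lambda(e,u,f) lambda(f,v,h) = lambda(e, vu, h) *)
Definition Rmor (S : semilattice) (e f : car S) : Type := {u | sand S f e u}.

Definition RS (S : semilattice) : catIE :=
  CatIE
    (CatI (car S) (Rmor S)
       (fun e => exist _ e (sand_id S e))
       (fun e f h (u : Rmor S e f) (v : Rmor S f h) =>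
          exist _ (smul S (proj1_sig v) (proj1_sig u))
            (sand_mul S _ _ _ _ _ (proj2_sig v) (proj2_sig u)))
       (Rsub S)
       (fun e f h => exist _ e (Rsub_sand S e f h)))
    (fun e f (u : Rmor S e f) => proj1_sig u)   (* gS = uS : g = u *)
    (fun e f (u : Rmor S e f) =>
       exist _ (proj1_sig u) (sand_epiR S _ _ _ (proj2_sig u))).

(* Both L(S) and R(S) are, up to the names of their morphisms, the category
   whose morphisms a -> b are labelled by the common lower bounds u of a and b,
   composed by meet, with the inclusion a ⊆ b labelled a and the epimorphic
   component of u ending at u.  In such a category a normal cone with apex c is
   forced to be a |-> ac: its isomorphic component lives at c and is the
   identity there, and compatibility with the inclusions b ∧ c ⊆ b, c
   determines all other components.  Hence H(γ;-) only depends on c, the set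
   H(γ;d) consists of the canonical cones whose apex lies below c and d, and a
   natural transformation H(γ;-) => H(γ';-) is multiplication by the label
   u <= c, c' of its component at the apex.  So γ |-> c is an isomorphism from
   N*C onto every category of this kind, in particular from N*L(S) onto R(S)
   and from N*R(S) onto L(S). *)

From Stdlib Require Import Setoid FunctionalExtensionality ProofIrrelevance
  IndefiniteDescription.

Lemma sig_eq {A : Type} {P : A -> Prop} (x y : sig P) :
  proj1_sig x = proj1_sig y -> x = y.
Proof. destruct x, y; simpl; apply subset_eq_compat. Qed.

Definition sle (S : semilattice) (x y : car S) : Prop := smul S x y = x.

Section SemilatticeOrder.
Variable S : semilattice.
Local Infix "**" := (smul S) (at level 40, left associativity).

Lemma sle_refl a : sle S a a.
Proof. apply smulI. Qed.

Lemma sle_mull a b : sle S (a ** b) a.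
Proof. unfold sle. rewrite (smulC S (a ** b) a), smulA, smulI. reflexivity. Qed.

Lemma sle_mulr a b : sle S (a ** b) b.
Proof. unfold sle. rewrite <- smulA, smulI. reflexivity. Qed.

Lemma sle_trans a b c : sle S a b -> sle S b c -> sle S a c.
Proof. unfold sle. intros Hab Hbc. rewrite <- Hab, <- smulA, Hbc. reflexivity. Qed.

Lemma sle_meet u a b : sle S u a -> sle S u b -> sle S u (a ** b).
Proof. unfold sle. intros Ha Hb. rewrite smulA, Ha, Hb. reflexivity. Qed.

Lemma sle_antisym u v : sle S u v -> sle S v u -> u = v.
Proof. unfold sle. intros Huv Hvu. rewrite <- Huv, smulC. exact Hvu. Qed.

Lemma sle_absorb u v : sle S u v -> v ** u = u.
Proof. unfold sle. rewrite smulC. trivial. Qed.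

Lemma absorb_sle u v : v ** u = u -> sle S u v.
Proof. unfold sle. rewrite smulC. trivial. Qed.

Lemma sle_mul_eq x y a : sle S x a -> x ** y = a -> x = a.
Proof. unfold sle. intros Hle E. rewrite <- Hle, <- E at 1. rewrite smulA, smulI. exact E. Qed.

Lemma mul_sle_absorb a c u : sle S u c -> a ** c ** u = a ** u.
Proof. intro Huc. rewrite <- smulA, (sle_absorb _ _ Huc). reflexivity. Qed.

End SemilatticeOrder.

Set Implicit Arguments.

(* The common shape of L(S) and R(S): the morphisms a -> b are determined by
   their labels, which range over the common lower bounds of a and b. *)
Record meet_cat (S : semilattice) := MeetCat {
  hom : car S -> car S -> Type;
  lab : forall {a b}, hom a b -> car S;
  mid : forall a, hom a a;
  mcomp : forall {a b c}, hom a b -> hom b c -> hom a c;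
  msub : car S -> car S -> Prop;
  mincl : forall {a b}, msub a b -> hom a b;
  mepi : forall {a b} (f : hom a b), hom a (lab f);
  mk : forall a b u, sle S u a -> sle S u b -> hom a b;
  lab_inj : forall {a b} (f g : hom a b), lab f = lab g -> f = g;
  lab_le_dom : forall {a b} (f : hom a b), sle S (lab f) a;
  lab_le_cod : forall {a b} (f : hom a b), sle S (lab f) b;
  lab_mk : forall {a b u} (h1 : sle S u a) (h2 : sle S u b), lab (mk h1 h2) = u;
  lab_id : forall {a}, lab (mid a) = a;
  lab_comp : forall {a b c} (f : hom a b) (g : hom b c),
    lab (mcomp f g) = smul S (lab f) (lab g);
  msub_sle : forall a b, msub a b <-> sle S a b;
  lab_incl : forall {a b} (h : msub a b), lab (mincl h) = a;
  lab_epi : forall {a b} (f : hom a b), lab (mepi f) = lab f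
}.

Unset Implicit Arguments.
Arguments mk {S} m a b u _ _.

Definition to_catIE {S} (C : meet_cat S) : catIE :=
  CatIE (CatI (car S) (hom C) (mid C) (@mcomp S C) (msub C) (@mincl S C))
    (@lab S C) (@mepi S C).

Definition LS_meet_cat (S : semilattice) : meet_cat S.
Proof.
refine (@MeetCat S (Lmor S) (fun e f u => proj1_sig u)
  (fun e => exist _ e (sand_id S e))
  (fun e f g (u : Lmor S e f) (v : Lmor S f g) =>
     exist _ (smul S (proj1_sig u) (proj1_sig v))
       (sand_mul S _ _ _ _ _ (proj2_sig u) (proj2_sig v)))
  (Lsub S) (fun e f h => exist _ e (Lsub_sand S e f h))
  (fun e f (u : Lmor S e f) =>
     exist _ (proj1_sig u) (sand_epi S _ _ _ (proj2_sig u)))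
  (fun a b u h1 h2 => exist _ u (sand_intro S a b u (sle_absorb S _ _ h1) h2))
  _ _ _ _ _ _ _ _ _); try reflexivity.
- intros a b f g; apply sig_eq.
- intros a b [u Hu]. apply (absorb_sle S), (sand_char S _ _ _ Hu).
- intros a b [u Hu]. apply (sand_char S _ _ _ Hu).
- intros a b. split.
  + intro H. apply (sand_char S _ _ _ (Lsub_sand S a b H)).
  + intros Hab x [s ->]. exists (smul S s a). rewrite <- smulA, Hab. reflexivity.
Defined.

Definition RS_meet_cat (S : semilattice) : meet_cat S.
Proof.
refine (@MeetCat S (Rmor S) (fun e f u => proj1_sig u)
  (fun e => exist _ e (sand_id S e))
  (fun e f h (u : Rmor S e f) (v : Rmor S f h) =>
     exist _ (smul S (proj1_sig v) (proj1_sig u))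
       (sand_mul S _ _ _ _ _ (proj2_sig v) (proj2_sig u)))
  (Rsub S) (fun e f h => exist _ e (Rsub_sand S e f h))
  (fun e f (u : Rmor S e f) =>
     exist _ (proj1_sig u) (sand_epiR S _ _ _ (proj2_sig u)))
  (fun a b u h1 h2 => exist _ u (sand_intro S b a u (sle_absorb S _ _ h2) h1))
  _ _ _ _ _ _ _ _ _); try reflexivity.
- intros a b f g; apply sig_eq.
- intros a b [u Hu]. apply (sand_char S _ _ _ Hu).
- intros a b [u Hu]. apply (absorb_sle S), (sand_char S _ _ _ Hu).
- intros; apply smulC.
- intros a b. split.
  + intro H. apply (absorb_sle S), (sand_char S _ _ _ (Rsub_sand S a b H)).
  + intros Hab x [s ->]. exists (smul S a s).
    rewrite smulA, (smulC S b a), Hab. reflexivity.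
Defined.

Section NormalDual.
Variable S : semilattice.
Variables C D : meet_cat S.
Local Infix "**" := (smul S) (at level 40, left associativity).
Local Notation CC := (to_catIE C).

Definition cone (c : car S) : family CC :=
  existT (fun c' => forall a, hom C a c') c
    (fun a => mk C a c (a ** c) (sle_mull S a c) (sle_mulr S a c)).

Lemma family_eq_cone (x : family CC) :
  (forall a, lab C (projT2 x a) = a ** projT1 x) -> x = cone (projT1 x).
Proof.
  destruct x as [c g]; simpl; intro Hg. unfold cone. f_equal.
  apply functional_extensionality_dep; intro a.
  apply (lab_inj C). rewrite (lab_mk C). apply Hg.
Qed.

Lemma cone_inj u v : cone u = cone v -> u = v.
Proof. intro E. exact (f_equal (@projT1 _ _) E). Qed.

Lemma star_epi_cone c d (f : hom C c d) :
  star CC (cone c) _ (mepi C f) = cone (lab C f).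
Proof.
  apply family_eq_cone. intro a. simpl.
  rewrite (lab_comp C), (lab_mk C), (lab_epi C).
  apply mul_sle_absorb, (lab_le_dom C).
Qed.

Lemma Hset_cone c d x :
  Hset CC (cone c) d x <-> exists u, sle S u c /\ sle S u d /\ x = cone u.
Proof.
  split.
  - intros [f ->]. exists (lab C f).
    split; [apply (lab_le_dom C)|split; [apply (lab_le_cod C)|apply star_epi_cone]].
  - intros [u [Huc [Hud ->]]]. exists (mk C c d u Huc Hud).
    simpl. rewrite star_epi_cone, (lab_mk C). reflexivity.
Qed.

Lemma Hset_cone_self c : Hset CC (cone c) c (cone c).
Proof. apply Hset_cone. exists c. repeat split; apply sle_refl. Qed.

Lemma Hset_cone_inj c c' : Hset CC (cone c) = Hset CC (cone c') -> c = c'.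
Proof.
  intro E.
  assert (Hle : forall c1 c2, Hset CC (cone c1) = Hset CC (cone c2) -> sle S c1 c2).
  { intros c1 c2 E12. pose proof (Hset_cone_self c1) as H. rewrite E12 in H.
    apply Hset_cone in H as [u [Huc2 [_ Hu]]].
    apply cone_inj in Hu. subst u. exact Huc2. }
  apply sle_antisym; apply Hle; [exact E | symmetry; exact E].
Qed.

Lemma Hrel_cone c d d' (k : hom C d d') x y :
  Hrel CC (cone c) d d' k x y <->
  exists f : hom C c d, x = cone (lab C f) /\ y = cone (lab C f ** lab C k).
Proof.
  assert (Hk : forall f : hom C c d,
    star CC (cone c) _ (mepi C (mcomp C f k)) = cone (lab C f ** lab C k)).
  { intro f. rewrite star_epi_cone, (lab_comp C). reflexivity. }
  split.
  - intros [f [-> ->]]. exists f. rewrite <- Hk. split; [apply star_epi_cone|reflexivity].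
  - intros [f [-> ->]]. exists f. rewrite <- Hk, <- star_epi_cone. split; reflexivity.
Qed.

Lemma cone_normal c : normal_cone CC (cone c).
Proof.
  split.
  - intros a b h. apply (lab_inj C). simpl.
    rewrite (lab_comp C), (lab_incl C), !(lab_mk C).
    apply (msub_sle C) in h. rewrite smulA, h. reflexivity.
  - exists c, (mid C c).
    split; apply (lab_inj C); simpl;
      rewrite (lab_comp C), (lab_mk C), (lab_id C), !smulI; reflexivity.
Qed.

(* The labels of the isomorphic component gm a : a -> c and of its inverse
   multiply to both a and c, so a = c and gm a is labelled a; the inclusions
   b ∧ a ⊆ a and b ∧ a ⊆ b then pin down the label of gm b. *)
Lemma normal_cone_eq g : normal_cone CC g -> g = cone (projT1 g).
Proof.
  destruct g as [c gm]. intros [Hincl [a [g' [Eg Eg']]]]. simpl in *.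
  apply (f_equal (lab C)) in Eg, Eg'.
  rewrite (lab_comp C), (lab_id C) in Eg. rewrite (lab_comp C), (lab_id C) in Eg'.
  assert (Hac : a = c) by (rewrite <- Eg, <- Eg'; apply smulC).
  subst c.
  assert (Hga : lab C (gm a) = a) by exact (sle_mul_eq S _ _ _ (lab_le_dom C _) Eg).
  assert (Hincl_lab : forall b b' (h : msub C b b'),
             lab C (gm b) = b ** lab C (gm b')).
  { intros b b' h. rewrite <- (Hincl b b' h). simpl.
    rewrite (lab_comp C), (lab_incl C). reflexivity. }
  apply family_eq_cone. intro b. simpl.
  assert (Hba : lab C (gm (b ** a)) = b ** a).
  { rewrite (Hincl_lab _ a) by (apply (msub_sle C), sle_mulr).
    rewrite Hga. apply sle_mulr. }
  rewrite <- Hba, (Hincl_lab (b ** a) b) by (apply (msub_sle C), sle_mull).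
  symmetry. apply (sle_absorb S), sle_meet; [apply (lab_le_dom C)|apply (lab_le_cod C)].
Qed.

(* The cone presenting X is only given propositionally, hence the choice. *)
Definition apex (X : NOb CC) : car S :=
  projT1 (proj1_sig (constructive_indefinite_description _ (proj2_sig X))).

Lemma NOb_cone (X : NOb CC) :
  proj1_sig X = (Hset CC (cone (apex X)), Hrel CC (cone (apex X))).
Proof.
  unfold apex. destruct (constructive_indefinite_description _ _) as [g [Hg ->]].
  simpl. rewrite (normal_cone_eq g Hg) at 1 2. reflexivity.
Qed.

Lemma FO_cone (X : NOb CC) : FO X = Hset CC (cone (apex X)).
Proof. unfold FO. rewrite NOb_cone. reflexivity. Qed.

Lemma FM_cone (X : NOb CC) : FM X = Hrel CC (cone (apex X)).
Proof. unfold FM. rewrite NOb_cone. reflexivity. Qed.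

Definition NOb_of (c : car S) : NOb CC :=
  exist _ (Hset CC (cone c), Hrel CC (cone c))
    (ex_intro _ (cone c) (conj (cone_normal c) eq_refl)).

Lemma apex_NOb_of c : apex (NOb_of c) = c.
Proof. apply Hset_cone_inj. rewrite <- FO_cone. reflexivity. Qed.

Lemma NOb_of_apex (X : NOb CC) : NOb_of (apex X) = X.
Proof. apply sig_eq. symmetry. apply NOb_cone. Qed.

Lemma FO_apex (X : NOb CC) : FO X (apex X) (cone (apex X)).
Proof. rewrite FO_cone. apply Hset_cone_self. Qed.

Lemma FO_char (X : NOb CC) d y : FO X d y ->
  sle S (projT1 y) (apex X) /\ sle S (projT1 y) d /\ y = cone (projT1 y).
Proof. rewrite FO_cone. intros [u [Hu [Hd ->]]]%Hset_cone. auto. Qed.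

Lemma Nsub_apex (X Y : NOb CC) : Nsub CC X Y <-> sle S (apex X) (apex Y).
Proof.
  unfold Nsub. rewrite !FO_cone, !FM_cone. split.
  - intros [HO _]. pose proof (HO _ _ (Hset_cone_self (apex X))) as H.
    apply Hset_cone in H as [u [Hu [_ E]]]. apply cone_inj in E. subst u. exact Hu.
  - intro Hle. split.
    + intros d x [u [Hu [Hd ->]]]%Hset_cone. apply Hset_cone.
      exists u. split; [exact (sle_trans S _ _ _ Hu Hle)|auto].
    + intros d d' k x y [f [-> ->]]%Hrel_cone. apply Hrel_cone.
      exists (mk C (apex Y) d (lab C f)
                (sle_trans S _ _ _ (lab_le_dom C f) Hle) (lab_le_cod C f)).
      rewrite (lab_mk C). auto.
Qed.

Definition apex_elem (X : NOb CC) : {x | FO X (apex X) x} :=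
  exist _ (cone (apex X)) (FO_apex X).

Definition nat_lab {X Y : NOb CC} (e : NHom CC X Y) : car S :=
  projT1 (proj1_sig (proj1_sig e (apex X) (apex_elem X))).

Lemma nat_lab_le_dom {X Y : NOb CC} (e : NHom CC X Y) : sle S (nat_lab e) (apex X).
Proof. apply (FO_char Y _ _ (proj2_sig (proj1_sig e (apex X) (apex_elem X)))). Qed.

Lemma nat_lab_le_cod {X Y : NOb CC} (e : NHom CC X Y) : sle S (nat_lab e) (apex Y).
Proof. apply (FO_char Y _ _ (proj2_sig (proj1_sig e (apex X) (apex_elem X)))). Qed.

(* Naturality along the morphism apex X -> d labelled by the apex of x. *)
Lemma nat_lab_apply {X Y : NOb CC} (e : NHom CC X Y) d x :
  proj1_sig (proj1_sig e d x) = cone (nat_lab e ** projT1 (proj1_sig x)).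
Proof.
  destruct (FO_char X d _ (proj2_sig x)) as [Hc [Hd Hx]].
  set (u := projT1 (proj1_sig x)) in *.
  pose (k := mk C (apex X) d u Hc Hd).
  assert (Hk : FM X (apex X) d k (proj1_sig (apex_elem X)) (proj1_sig x)).
  { rewrite FM_cone. apply Hrel_cone. exists (mid C (apex X)).
    unfold k. rewrite (lab_id C), (lab_mk C), (sle_absorb S _ _ Hc).
    auto. }
  assert (He : Hrel CC (cone (apex Y)) (apex X) d k
                 (proj1_sig (proj1_sig e (apex X) (apex_elem X)))
                 (proj1_sig (proj1_sig e d x))).
  { rewrite <- FM_cone. exact (proj2_sig e _ _ k (apex_elem X) x Hk). }
  apply Hrel_cone in He as [f [Hf ->]].
  unfold nat_lab. rewrite Hf. unfold k. rewrite (lab_mk C). reflexivity.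
Qed.

Lemma nat_lab_inj {X Y : NOb CC} (e1 e2 : NHom CC X Y) :
  nat_lab e1 = nat_lab e2 -> e1 = e2.
Proof.
  intro E. apply sig_eq.
  apply functional_extensionality_dep; intro d.
  apply functional_extensionality_dep; intro x.
  apply sig_eq. rewrite !nat_lab_apply, E. reflexivity.
Qed.

Lemma nat_lab_comp {X Y Z : NOb CC} (e1 : NHom CC X Y) (e2 : NHom CC Y Z) :
  nat_lab (Ncomp CC X Y Z e1 e2) = nat_lab e1 ** nat_lab e2.
Proof. unfold nat_lab at 1. simpl. rewrite nat_lab_apply. apply smulC. Qed.

Lemma mul_FO (X Y : NOb CC) u (Hu : sle S u (apex Y)) d (x : {x | FO X d x}) :
  FO Y d (cone (u ** projT1 (proj1_sig x))).
Proof.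
  destruct (FO_char X d _ (proj2_sig x)) as [_ [Hd _]].
  rewrite FO_cone. apply Hset_cone. eexists; split; [|split; [|reflexivity]].
  - exact (sle_trans S _ _ _ (sle_mull S _ _) Hu).
  - exact (sle_trans S _ _ _ (sle_mulr S _ _) Hd).
Qed.

Definition nat_of_lab (X Y : NOb CC) u (Hu : sle S u (apex Y)) : NHom CC X Y.
Proof.
  refine (exist _ (fun d x => exist _ _ (mul_FO X Y u Hu d x)) _).
  intros d d' k [x Hx] [y Hy] Hxy. simpl in *. rewrite FM_cone in Hxy |- *.
  apply Hrel_cone in Hxy as [f [-> ->]]. apply Hrel_cone.
  exists (mk C (apex Y) d (u ** lab C f)
            (sle_trans S _ _ _ (sle_mull S _ _) Hu)
            (sle_trans S _ _ _ (sle_mulr S _ _) (lab_le_cod C f))).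
  rewrite (lab_mk C). simpl. rewrite smulA. auto.
Defined.

Lemma nat_lab_of_lab (X Y : NOb CC) u (HuX : sle S u (apex X)) (HuY : sle S u (apex Y)) :
  nat_lab (nat_of_lab X Y u HuY) = u.
Proof. exact HuX. Qed.

Definition dual_hom {X Y : NOb CC} (e : NHom CC X Y) : hom D (apex X) (apex Y) :=
  mk D (apex X) (apex Y) (nat_lab e) (nat_lab_le_dom e) (nat_lab_le_cod e).

Lemma lab_dual_hom {X Y : NOb CC} (e : NHom CC X Y) : lab D (dual_hom e) = nat_lab e.
Proof. apply (lab_mk D). Qed.

Theorem normal_dual_iso : iso_ncat (NDual CC) (to_catIE D).
Proof.
  exists apex, (@dual_hom).
  split; [|split; [|split; [|split; [|split]]]].
  - intro X. apply (lab_inj D). rewrite lab_dual_hom. symmetry. apply (lab_id D).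
  - intros X Y Z e1 e2. apply (lab_inj D). cbn [to_catIE base comp].
    rewrite (lab_comp D), !lab_dual_hom. apply nat_lab_comp.
  - split.
    + intros X Y E. rewrite <- (NOb_of_apex X), <- (NOb_of_apex Y), E. reflexivity.
    + intro c. exists (NOb_of c). apply apex_NOb_of.
  - intros X Y. split.
    + intros e1 e2 E. apply nat_lab_inj.
      rewrite <- !lab_dual_hom, E. reflexivity.
    + intro h. exists (nat_of_lab X Y (lab D h) (lab_le_cod D h)).
      apply (lab_inj D). rewrite lab_dual_hom.
      apply nat_lab_of_lab, (lab_le_dom D).
  - intros X Y. simpl. rewrite (msub_sle D). apply Nsub_apex.
  - intros X Y h h'. apply (lab_inj D). cbn [to_catIE base incl].
    rewrite lab_dual_hom, (lab_incl D). reflexivity.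
Qed.

End NormalDual.

Theorem mainTheorem9 (S : semilattice) :
  iso_ncat (NDual (LS S)) (RS S) /\ iso_ncat (NDual (RS S)) (LS S).
Proof.
  split.
  - exact (normal_dual_iso S (LS_meet_cat S) (RS_meet_cat S)).
  - exact (normal_dual_iso S (RS_meet_cat S) (LS_meet_cat S)).
Qed.
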